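(* Let $G$ be a graph, $P$ a non-trivial prime graph in a split decomposition of $G$, $k$ a positive integer, and $(T,\delta)$ a branch decomposition of $G$ of sm-width less than $k$. Let $a\in V(P)$ and let $(X,Y)$ be a cut of $G$ induced by an edge of $T$. If $|X\cap\operatorname{act}(a:P)|\ge k$ and $|Y\cap \operatorname{act}(N_P(a):P)|\ge k$, then $(X,Y)$ is a split of $G$.
   Context: Graphs are finite, simple, undirected; $\overline{A}=V(G)\setminus A$; $N(S)=N_G(S)=(\bigcup_{v\in S}N(v))\setminus S$; $G[A,B]$ is the bipartite graph on $A\cup B$ with the edges of $G$ between $A$ and $B$. A split of a connected graph $G$ is a partition $(V_1,V_2)$ of $V(G)$ with $|V_1|,|V_2|\ge2$ such that every vertex of $V_1$ with a neighbour in $V_2$ has the same neighbourhood in $V_2$. $\operatorname{mm}(A)$ is the maximum size of a matching in $G[A,\overline A]$, and $\operatorname{sm}(A)=1$ if $(A,\overline A)$ is a split of $G$, otherwise $\operatorname{sm}(A)=\operatorname{mm}(A)$. A branch decomposition $(T,\delta)$ of $G$ is a tree $T$ of maximum degree $3$ with a bijection $\delta$ from the leaves of $T$ to $V(G)$; each edge $e$ of $T$ induces the cut $(A,\overline A)$ where $A$ is the set of $\delta$-images of the leaves in one component of $T-e$. The sm-width of $(T,\delta)$ is the maximum of $\operatorname{sm}(A)$ over cuts induced by edges of $T$; the sm-width $\operatorname{smw}(G)$ of $G$ is the minimum over all branch decompositions. Split decomposition: decomposing along a split $(V_1,V_2)$ gives $G_1=G[V_1]$ plus a new marker $v$ adjacent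 to $N_G(V_2)$ and $G_2=G[V_2]$ plus the same marker adjacent to $N_G(V_1)$; a graph with no split is prime, non-trivial if it has more than 3 vertices; a split decomposition recursively decomposes until all parts are prime, with the split decomposition tree having prime graphs as nodes adjacent iff they share a marker. For $v\in V(G_i)$ ($G_i$ a prime graph of the decomposition), $\operatorname{tot}(v:G_i)=\{v\}$ if $v\in V(G)$, and otherwise (marker shared with $G_j$) the set of vertices of $V(G)$ in the prime graphs of the component of the tree minus $G_i$ containing $G_j$. $\operatorname{act}(v:G_i)=N_G(V(G)\setminus \operatorname{tot}(v:G_i))$, and for $V'\subseteq V(G_i)$, $\operatorname{act}(V':G_i)=\bigcup_{v\in V'}\operatorname{act}(v:G_i)$. *)

From mathcomp Require Import all_boot.
Set Implicit Arguments.
Unset Strict Implicit.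
Unset Printing Implicit Defensive.

Section Defs.
Variable U : finType.

(* A graph with vertex set gV inside a universe U (markers live in U too);
   only gE restricted to gV matters. *)
Record graph := Graph { gV : {set U}; gE : rel U }.

Definition grel (G : graph) : rel U :=
  [rel x y | [&& x \in gV G, y \in gV G & gE G x y]].

Definition connected_graph (G : graph) : Prop :=
  forall x y, x \in gV G -> y \in gV G -> connect (grel G) x y.

Definition nbhd (G : graph) (S : {set U}) : {set U} :=
  [set y in gV G | (y \notin S) && [exists x in S, (x \in gV G) && gE G x y]].

Definition nbrs (G : graph) (a : U) : {set U} :=
  [set y in gV G | (y != a) && gE G a y].

Definition is_split (G : graph) (V1 : {set U}) : bool :=
  let V2 := gV G :\: V1 in
  [&& V1 \subset gV G, 1 < #|V1|, 1 < #|V2| &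
   [forall x in V1, forall y in V1,
     ([exists z in V2, gE G x z] && [exists z in V2, gE G y z]) ==>
     ([set z in V2 | gE G x z] == [set z in V2 | gE G y z])]].

Definition prime_graph (G : graph) : bool := ~~ [exists V1, is_split G V1].

Definition split_left (G : graph) (V1 : {set U}) (m : U) : graph :=
  let V2 := gV G :\: V1 in
  Graph (m |: V1)
    [rel x y | [|| [&& x \in V1, y \in V1 & gE G x y],
                   (x == m) && (y \in nbhd G V2) |
                   (y == m) && (x \in nbhd G V2)]].

Definition split_right (G : graph) (V1 : {set U}) (m : U) : graph :=
  let V2 := gV G :\: V1 in
  Graph (m |: V2)
    [rel x y | [|| [&& x \in V2, y \in V2 & gE G x y],
                   (x == m) && (y \in nbhd G V1) |
                   (y == m) && (x \in nbhd G V1)]].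

Definition parts_verts (p : seq graph) : {set U} := \bigcup_(H <- p) gV H.

Inductive split_decomp : graph -> seq graph -> Prop :=
| sd_prime G : prime_graph G -> split_decomp G [:: G]
| sd_split G V1 m p1 p2 :
    is_split G V1 -> m \notin gV G ->
    split_decomp (split_left G V1 m) p1 ->
    split_decomp (split_right G V1 m) p2 ->
    parts_verts p1 :&: parts_verts p2 = [set m] ->
    split_decomp G (p1 ++ p2).

(* the split decomposition tree: prime graphs adjacent iff they share a marker *)
Definition sd_adj (G : graph) (p : seq graph) : rel 'I_(size p) :=
  fun (j l : 'I_(size p)) => (j != l) &&
     [exists u, [&& u \notin gV G, u \in gV (nth G p j) & u \in gV (nth G p l)]].

Definition sd_adj_minus (G : graph) (p : seq graph) (i : 'I_(size p)) :
  rel 'I_(size p) :=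
  fun (j l : 'I_(size p)) => [&& j != i, l != i & @sd_adj G p j l].

Definition tot (G : graph) (p : seq graph) (i : 'I_(size p)) (v : U) : {set U} :=
  if v \in gV G then [set v]
  else [set x in gV G | [exists j : 'I_(size p), exists l : 'I_(size p),
          [&& j != i, v \in gV (nth G p j), connect (@sd_adj_minus G p i) j l
            & x \in gV (nth G p l)]]].

Definition act (G : graph) (p : seq graph) (i : 'I_(size p)) (v : U) : {set U} :=
  nbhd G (gV G :\: @tot G p i v).

Definition act_set (G : graph) (p : seq graph) (i : 'I_(size p)) (V' : {set U})
  : {set U} := \bigcup_(v in V') @act G p i v.

Definition is_matching (G : graph) (A : {set U}) (M : {set U * U}) : bool :=
  [forall q in M, [&& q.1 \in A, q.2 \in gV G :\: A & gE G q.1 q.2]] &&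
  [forall q in M, forall r in M, ((q.1 == r.1) || (q.2 == r.2)) ==> (q == r)].

Definition mm (G : graph) (A : {set U}) : nat :=
  \max_(M : {set U * U} | is_matching G A M) #|M|.

Definition sm (G : graph) (A : {set U}) : nat :=
  if is_split G A then 1 else mm G A.

End Defs.

Section Branch.
Variables (U N : finType).

Definition remove_edge (t : rel N) (u w : N) : rel N :=
  [rel x y | t x y && ~~ (((x == u) && (y == w)) || ((x == w) && (y == u)))].

Definition is_tree (t : rel N) : Prop :=
  [/\ symmetric t, irreflexive t, (forall x y, connect t x y) &
      (forall u w, t u w -> ~~ connect (remove_edge t u w) u w)].

Definition tdeg (t : rel N) (u : N) : nat := #|[set w | t u w]|.

Definition leaves (t : rel N) : {set N} := [set u | tdeg t u <= 1].

Definition branch_decomp (VG : {set U}) (t : rel N) (delta : N -> U) : Prop :=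
  [/\ is_tree t, (forall u, tdeg t u <= 3),
      {in leaves t &, injective delta} & delta @: leaves t = VG].

Definition edge_cut (t : rel N) (delta : N -> U) (u w : N) : {set U} :=
  delta @: [set l in leaves t | connect (remove_edge t u w) u l].

End Branch.

(* For adjacent vertices a, b of a part P of a split decomposition, every
   vertex of act(a:P) is adjacent in G to every vertex of act(b:P).  This is
   proved by induction along the decomposition: for a split (V1, V2) of G
   with marker m, collapsing V2 onto m maps tot and act of a part of the left
   graph G1, computed in G, onto the same sets computed in G1; an edge of G1
   through m comes back to an edge of G because the two frontiers of a split
   are completely joined.  Computing tot in this way needs that the
   decomposition tree is connected and that each vertex of G lies in exactly
   one part.
   If the cut (X, Y) were not a split, X meets act(a:P) and Y meets
   act(N_P(a):P) in at least k vertices each, and these completely joined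
   sets carry a matching of size k, contradicting sm-width < k. *)

From mathcomp Require Import all_boot.
Set Implicit Arguments.
Unset Strict Implicit.
Unset Printing Implicit Defensive.

Lemma connect_ind (T : finType) (e : rel T) (S : T -> Prop) x y :
  (forall a b, e a b -> S a -> S b) -> connect e x y -> S x -> S y.
Proof.
move=> closedS /connectP [q pq ->]; elim: q x pq => //= z q IH x /andP [exz pq].
by move=> /(closedS _ _ exz); apply: IH.
Qed.

Lemma connect_map (T T' : finType) (e : rel T) (e' : rel T') (f : T -> T') x y :
  (forall a b, e a b -> e' (f a) (f b)) -> connect e x y -> connect e' (f x) (f y).
Proof.
move=> fe /connectP [q pq ->]; elim: q x pq => //= z q IH x /andP [exz pq].
exact: connect_trans (connect1 (fe _ _ exz)) (IH _ pq).
Qed.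

Section Parts.
Variable U : finType.
Implicit Types (G d : graph U) (p s : seq (graph U)).

Lemma parts_vertsP d s x :
  reflect (exists j : 'I_(size s), x \in gV (nth d s j)) (x \in parts_verts s).
Proof.
rewrite /parts_verts (big_nth d) big_mkord.
by apply: (iffP bigcupP) => [[j _ h]|[j h]]; exists j.
Qed.

Lemma mem_parts_verts d s (j : 'I_(size s)) x :
  x \in gV (nth d s j) -> x \in parts_verts s.
Proof. by move=> h; apply/(parts_vertsP d); exists j. Qed.

Lemma sd_adjC G p : symmetric (@sd_adj U G p).
Proof.
move=> j l; rewrite /sd_adj eq_sym; congr (_ && _).
by apply/existsP/existsP => [] [v /and3P [h1 h2 h3]]; exists v; rewrite h1 h2 h3.
Qed.

Lemma connect_sd_adj_minus_neq G p (i j l : 'I_(size p)) :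
  connect (sd_adj_minus G i) j l -> j != i -> l != i.
Proof. by apply: (connect_ind (S := fun z => z != i)) => a b /and3P []. Qed.

Lemma actP G p (i : 'I_(size p)) v x :
  reflect [/\ x \in gV G, x \in tot G i v &
            exists2 z, z \in gV G /\ z \notin tot G i v & gE G z x]
          (x \in act G i v).
Proof.
rewrite /act /nbhd !inE; apply: (iffP and3P).
- move=> [xG xtot /existsP [z /andP [hz /andP [_ zx]]]].
  move: xtot hz; rewrite xG andbT negbK inE => xtot /andP [ztot zG].
  by split => //; exists z.
- move=> [xG xtot [z [zG ztot] zx]]; split; rewrite ?xG ?xtot //.
  by apply/existsP; exists z; rewrite !inE ztot zG zx.
Qed.

Definition parts_cover G p := forall x, x \in gV G -> x \in parts_verts p.

Definition parts_unique G p := forall x (j l : 'I_(size p)),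
  x \in gV G -> x \in gV (nth G p j) -> x \in gV (nth G p l) -> j = l.

Definition sd_tree_connected G p :=
  forall j l : 'I_(size p), connect (@sd_adj U G p) j l.

Definition act_complete_at G p (i : 'I_(size p)) := forall a b x y,
  a \in gV (nth G p i) -> b \in gV (nth G p i) -> gE (nth G p i) a b ->
  x \in act G i a -> y \in act G i b -> gE G x y.

Definition act_complete G p := forall i : 'I_(size p), @act_complete_at G p i.

Definition sd_invariants G p :=
  [/\ parts_cover G p, parts_unique G p, sd_tree_connected G p & act_complete G p].

End Parts.

(* G1 and G2 are the two sides of a split (V1, V2) of G with marker m, and
   emb1, emb2 place their decompositions p1, p2 inside the decomposition p of
   G.  Nothing distinguishes the two sides, so the section is instantiated
   once for each orientation of the split. *)
Section SplitStep.
Variables (U : finType) (G G1 G2 : graph U) (V1 V2 : {set U}) (m : U).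
Variables (p1 p2 p : seq (graph U)).
Variables (emb1 : 'I_(size p1) -> 'I_(size p)) (emb2 : 'I_(size p2) -> 'I_(size p)).
Hypotheses (VG_V12 : forall x, (x \in gV G) = (x \in V1) || (x \in V2))
  (V12_disjoint : forall x, x \in V1 -> x \in V2 -> False)
  (m_notin_G : m \notin gV G)
  (G1_verts : gV G1 = m |: V1) (G2_verts : gV G2 = m |: V2)
  (parts12_marker : forall x, x \in parts_verts p1 -> x \in parts_verts p2 -> x = m)
  (cover1 : parts_cover G1 p1) (cover2 : parts_cover G2 p2)
  (unique1 : parts_unique G1 p1) (unique2 : parts_unique G2 p2)
  (connected1 : sd_tree_connected G1 p1) (connected2 : sd_tree_connected G2 p2)
  (nth_emb1 : forall j, nth G p (emb1 j) = nth G1 p1 j)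
  (nth_emb2 : forall j, nth G p (emb2 j) = nth G2 p2 j)
  (emb1_inj : injective emb1) (emb2_inj : injective emb2)
  (emb_cover : forall l, (exists j, l = emb1 j) \/ (exists j, l = emb2 j))
  (emb_disjoint : forall j l, emb1 j != emb2 l).

Lemma V1_G1 x : x \in V1 -> x \in gV G1.
Proof. by move=> h; rewrite G1_verts setU1r. Qed.

Lemma V2_G2 x : x \in V2 -> x \in gV G2.
Proof. by move=> h; rewrite G2_verts setU1r. Qed.

Lemma m_G1 : m \in gV G1. Proof. by rewrite G1_verts setU11. Qed.
Lemma m_G2 : m \in gV G2. Proof. by rewrite G2_verts setU11. Qed.

Lemma m_notin_V1 : m \notin V1.
Proof. by apply: contra m_notin_G; rewrite VG_V12 => ->. Qed.

Lemma m_notin_V2 : m \notin V2.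
Proof. by apply: contra m_notin_G; rewrite VG_V12 orbC => ->. Qed.

Lemma part1_V1 x (j : 'I_(size p1)) : x \in gV (nth G1 p1 j) -> x \in gV G -> x \in V1.
Proof.
move=> xj; rewrite VG_V12 => /orP [//|xV2].
have xm := parts12_marker (mem_parts_verts xj) (cover2 (V2_G2 xV2)).
by move: xV2; rewrite xm (negbTE m_notin_V2).
Qed.

Lemma part2_V2 x (j : 'I_(size p2)) : x \in gV (nth G2 p2 j) -> x \in gV G -> x \in V2.
Proof.
move=> xj; rewrite VG_V12 => /orP [xV1|//].
have xm := parts12_marker (cover1 (V1_G1 xV1)) (mem_parts_verts xj).
by move: xV1; rewrite xm (negbTE m_notin_V1).
Qed.

Lemma part1_marker u (j : 'I_(size p1)) :
  u \in gV (nth G1 p1 j) -> u \notin gV G1 -> u \notin gV G.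
Proof. by move=> uj; apply: contra => /(part1_V1 uj)/V1_G1. Qed.

Lemma part2_marker u (j : 'I_(size p2)) :
  u \in gV (nth G2 p2 j) -> u \notin gV G2 -> u \notin gV G.
Proof. by move=> uj; apply: contra => /(part2_V2 uj)/V2_G2. Qed.

Lemma sd_adj_emb1 (j l : 'I_(size p1)) : sd_adj G1 j l -> sd_adj G (emb1 j) (emb1 l).
Proof.
case/andP => jl /existsP [u /and3P [uG1 uj ul]].
rewrite /sd_adj (inj_eq emb1_inj) jl; apply/existsP; exists u.
by rewrite !nth_emb1 uj ul (part1_marker uj uG1).
Qed.

Lemma sd_adj_emb2 (j l : 'I_(size p2)) : sd_adj G2 j l -> sd_adj G (emb2 j) (emb2 l).
Proof.
case/andP => jl /existsP [u /and3P [uG2 uj ul]].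
rewrite /sd_adj (inj_eq emb2_inj) jl; apply/existsP; exists u.
by rewrite !nth_emb2 uj ul (part2_marker uj uG2).
Qed.

Lemma sd_adj_emb1_inv (j l : 'I_(size p1)) : sd_adj G (emb1 j) (emb1 l) -> sd_adj G1 j l.
Proof.
case/andP; rewrite (inj_eq emb1_inj) => jl /existsP [u /and3P [uG]].
rewrite !nth_emb1 => uj ul; rewrite /sd_adj jl; apply/existsP; exists u.
rewrite uj ul !andbT; apply: contraNN jl; rewrite G1_verts => /setU1P [um|uV1].
  by rewrite um in uj ul; rewrite (unique1 m_G1 uj ul).
by rewrite VG_V12 uV1 in uG.
Qed.

Lemma sd_adj_cross_marker (j : 'I_(size p1)) (l : 'I_(size p2)) :
  sd_adj G (emb1 j) (emb2 l) -> m \in gV (nth G1 p1 j).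
Proof.
case/andP => _ /existsP [u /and3P [_]]; rewrite nth_emb1 nth_emb2 => uj ul.
by rewrite -(parts12_marker (mem_parts_verts uj) (mem_parts_verts ul)).
Qed.

Lemma marker_part1 : exists j : 'I_(size p1), m \in gV (nth G1 p1 j).
Proof. exact/(parts_vertsP G1)/cover1/m_G1. Qed.

Lemma marker_part2 : exists j : 'I_(size p2), m \in gV (nth G2 p2 j).
Proof. exact/(parts_vertsP G2)/cover2/m_G2. Qed.

Lemma sd_adj_marker_parts (j : 'I_(size p1)) (l : 'I_(size p2)) :
  m \in gV (nth G1 p1 j) -> m \in gV (nth G2 p2 l) -> sd_adj G (emb1 j) (emb2 l).
Proof.
move=> mj ml; rewrite /sd_adj emb_disjoint; apply/existsP; exists m.
by rewrite nth_emb1 nth_emb2 mj ml m_notin_G.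
Qed.

Lemma parts_cover_step : parts_cover G p.
Proof.
move=> x; rewrite VG_V12 => /orP [xV|xV].
  have /(parts_vertsP G1) [j xj] := cover1 (V1_G1 xV).
  by apply: (@mem_parts_verts _ G _ (emb1 j)); rewrite nth_emb1.
have /(parts_vertsP G2) [j xj] := cover2 (V2_G2 xV).
by apply: (@mem_parts_verts _ G _ (emb2 j)); rewrite nth_emb2.
Qed.

Lemma parts_unique_step : parts_unique G p.
Proof.
move=> x j l xG.
case: (emb_cover j) => [[j' ->]|[j' ->]]; case: (emb_cover l) => [[l' ->]|[l' ->]];
  rewrite ?nth_emb1 ?nth_emb2 => xj xl.
- by rewrite (unique1 (V1_G1 (part1_V1 xj xG)) xj xl).
- by case: (V12_disjoint (part1_V1 xj xG) (part2_V2 xl xG)).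
- by case: (V12_disjoint (part1_V1 xl xG) (part2_V2 xj xG)).
- by rewrite (unique2 (V2_G2 (part2_V2 xj xG)) xj xl).
Qed.

Lemma sd_tree_connected_step : sd_tree_connected G p.
Proof.
have [j1 mj1] := marker_part1; have [j2 mj2] := marker_part2.
suff to_j1 j : connect (sd_adj G (p:=p)) j (emb1 j1).
  move=> j l; apply: connect_trans (to_j1 j) _.
  by rewrite (sym_connect_sym (@sd_adjC _ G p)).
case: (emb_cover j) => [[j' ->]|[j' ->]].
  exact: connect_map sd_adj_emb1 (connected1 _ _).
apply: connect_trans (connect_map sd_adj_emb2 (connected2 j' j2)) (connect1 _).
by rewrite sd_adjC; apply: sd_adj_marker_parts.
Qed.

Definition lift1 x := if x \in V1 then x else m.

Lemma lift1_G1 x : x \in gV G -> lift1 x \in gV G1.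
Proof. by rewrite /lift1; case: ifP => [xV _|_ _]; [exact: V1_G1 | exact: m_G1]. Qed.

Lemma lift1_eq_m x : (lift1 x == m) = (x \notin V1).
Proof.
rewrite /lift1; case: ifP => [xV1|_]; rewrite ?eqxx //=.
by apply: contraTF xV1 => /eqP ->; rewrite (negbTE m_notin_V1).
Qed.

Section TotLift.
Variable i1 : 'I_(size p1).

Lemma connect_minus_emb1 (j l : 'I_(size p1)) : connect (sd_adj_minus G1 i1) j l ->
  connect (sd_adj_minus G (emb1 i1)) (emb1 j) (emb1 l).
Proof.
apply: connect_map => a b /and3P [ai bi ab].
by rewrite /sd_adj_minus !(inj_eq emb1_inj) ai bi sd_adj_emb1.
Qed.

Lemma connect_minus_emb2 (j l : 'I_(size p2)) :
  connect (sd_adj_minus G (emb1 i1)) (emb2 j) (emb2 l).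
Proof.
apply: connect_map (connected2 j l) => a b ab.
by rewrite /sd_adj_minus ![_ == emb1 i1]eq_sym !emb_disjoint sd_adj_emb2.
Qed.

Lemma connect_minus_from_emb1 (j : 'I_(size p1)) l :
  connect (sd_adj_minus G (emb1 i1)) (emb1 j) l ->
  (exists2 l', l = emb1 l' & connect (sd_adj_minus G1 i1) j l') \/
  ((exists l', l = emb2 l') /\
   exists2 jm : 'I_(size p1), m \in gV (nth G1 p1 jm) & connect (sd_adj_minus G1 i1) j jm).
Proof.
pose reached l := (exists2 l', l = emb1 l' & connect (sd_adj_minus G1 i1) j l') \/
  ((exists l', l = emb2 l') /\
   exists2 jm : 'I_(size p1), m \in gV (nth G1 p1 jm) & connect (sd_adj_minus G1 i1) j jm).
move=> c; suff : reached l by [].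
apply: (connect_ind (S := reached) _ c); last by left; exists j.
move=> a b /and3P [ai bi ab].
case: (emb_cover a) => [[a' ea]|[a' ea]]; case: (emb_cover b) => [[b' eb]|[b' eb]]; subst a b.
- case=> [[l' /emb1_inj <- cl]|[[l' el] _]]; last by move: (emb_disjoint a' l'); rewrite el eqxx.
  left; exists b' => //; apply: connect_trans cl (connect1 _).
  by apply/and3P; split; rewrite -?(inj_eq emb1_inj) //; apply: sd_adj_emb1_inv.
- case=> [[l' /emb1_inj <- cl]|[[l' el] _]]; last by move: (emb_disjoint a' l'); rewrite el eqxx.
  by right; split; [exists b' | exists a'; first exact: sd_adj_cross_marker ab].
- case=> [[l' el _]|[_ [jm mjm cl]]]; first by move: (emb_disjoint l' a'); rewrite el eqxx.
  left; exists b' => //; rewrite sd_adjC in ab.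
  by rewrite -(unique1 m_G1 mjm (sd_adj_cross_marker ab)).
- case=> [[l' el _]|[_ [jm mjm cl]]]; first by move: (emb_disjoint l' a'); rewrite el eqxx.
  by right; split; [exists b' | exists jm].
Qed.

Lemma tot_marker x : m \in gV (nth G1 p1 i1) -> x \in gV G ->
  (x \in tot G (emb1 i1) m) = (x \notin V1).
Proof.
move=> mi1 xG; rewrite /tot (negbTE m_notin_G) inE xG /=; apply/existsP/idP.
- move=> [j /existsP [l /and4P [ji mj cjl xl]]].
  case: (emb_cover j) => [[j' ej]|[j' ej]]; subst j.
    by rewrite nth_emb1 in mj; rewrite (unique1 m_G1 mj mi1) eqxx in ji.
  have [l' el] : exists l', l = emb2 l'.
    apply: (connect_ind (S := fun l => exists l', l = emb2 l') _ cjl); last by exists j'.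
    move=> a b /and3P [_ bi ab] [a' ea]; subst a.
    case: (emb_cover b) => [[b' eb]|//]; subst b; rewrite sd_adjC in ab.
    by rewrite (unique1 m_G1 (sd_adj_cross_marker ab) mi1) eqxx in bi.
  subst l; rewrite nth_emb2 in xl.
  by apply/negP => /V12_disjoint; apply; apply: part2_V2 xl xG.
- move=> xV1; have xV2 : x \in V2 by rewrite VG_V12 (negbTE xV1) in xG.
  have [j2 mj2] := marker_part2.
  have /(parts_vertsP G2) [l2 xl2] := cover2 (V2_G2 xV2).
  exists (emb2 j2); apply/existsP; exists (emb2 l2).
  by rewrite eq_sym emb_disjoint !nth_emb2 mj2 xl2 connect_minus_emb2.
Qed.

Lemma tot_lift_inner v x : v \in gV (nth G1 p1 i1) -> v \notin gV G1 -> x \in gV G ->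
  (x \in tot G (emb1 i1) v) = (lift1 x \in tot G1 i1 v).
Proof.
move=> vi1 vG1 xG; rewrite /tot (negbTE vG1) (negbTE (part1_marker vi1 vG1)).
rewrite !inE xG lift1_G1 //=; apply/existsP/existsP.
- move=> [j /existsP [l /and4P [ji vj cjl xl]]].
  case: (emb_cover j) => [[j' ej]|[j' ej]]; subst j; last first.
    rewrite nth_emb2 in vj.
    have vm := parts12_marker (mem_parts_verts vi1) (mem_parts_verts vj).
    by rewrite vm m_G1 in vG1.
  rewrite nth_emb1 in vj; rewrite (inj_eq emb1_inj) in ji.
  exists j'; apply/existsP.
  case: (connect_minus_from_emb1 cjl) => [[l' el cl]|[[l' el] [jm mjm cl]]]; subst l.
  + rewrite nth_emb1 in xl; exists l'.
    by rewrite ji vj cl /lift1 (part1_V1 xl xG).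
  + rewrite nth_emb2 in xl; exists jm.
    have xV1 : x \in V1 = false by apply/negP => /V12_disjoint; apply; apply: part2_V2 xl xG.
    by rewrite ji vj cl /lift1 xV1.
- move=> [j /existsP [l /and4P [ji vj cjl xl]]].
  have ji' : emb1 j != emb1 i1 by rewrite (inj_eq emb1_inj).
  exists (emb1 j); apply/existsP.
  move: xl; rewrite /lift1; case: ifP => xV1 xl.
    by exists (emb1 l); rewrite ji' !nth_emb1 vj xl connect_minus_emb1.
  have xV2 : x \in V2 by rewrite VG_V12 xV1 in xG.
  have [j2 mj2] := marker_part2.
  have /(parts_vertsP G2) [l2 xl2] := cover2 (V2_G2 xV2).
  exists (emb2 l2); rewrite ji' nth_emb1 nth_emb2 vj xl2 andbT /=.
  apply: connect_trans (connect_minus_emb1 cjl) _.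
  apply: connect_trans (connect_minus_emb2 j2 l2); apply: connect1.
  apply/and3P; split; first by rewrite (inj_eq emb1_inj) (connect_sd_adj_minus_neq cjl ji).
    by rewrite eq_sym emb_disjoint.
  exact: sd_adj_marker_parts.
Qed.

Lemma tot_lift v x : v \in gV (nth G1 p1 i1) -> x \in gV G ->
  (x \in tot G (emb1 i1) v) = (lift1 x \in tot G1 i1 v).
Proof.
move=> vi1 xG; have [vG1|vG1] := boolP (v \in gV G1); last exact: tot_lift_inner.
have -> : tot G1 i1 v = [set v] by rewrite /tot vG1.
rewrite inE; move: vG1; rewrite G1_verts => /setU1P [vm|vV1].
  by subst v; rewrite tot_marker // lift1_eq_m.
have -> : tot G (emb1 i1) v = [set v] by rewrite /tot VG_V12 vV1.
rewrite inE /lift1; case: ifP => // xV1.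
apply/eqP/eqP => [xv|mv]; first by move: vV1; rewrite -xv xV1.
by move: vV1; rewrite -mv (negbTE m_notin_V1).
Qed.
End TotLift.

Hypotheses (symG : symmetric (gE G))
  (G1_edges : forall x y, gE G1 x y =
     [|| [&& x \in V1, y \in V1 & gE G x y], (x == m) && (y \in nbhd G V2) |
         (y == m) && (x \in nbhd G V2)])
  (nbhds_complete : forall x y, x \in V1 -> y \in V2 ->
     x \in nbhd G V2 -> y \in nbhd G V1 -> gE G x y)
  (complete1 : act_complete G1 p1).

Lemma V1_neq_m x : x \in V1 -> (x == m) = false.
Proof. by apply: contraTF => /eqP ->; apply: m_notin_V1. Qed.

Lemma m_notin_nbhd S : (m \in nbhd G S) = false.
Proof. by rewrite inE (negbTE m_notin_G). Qed.

Lemma nbhd_V2 x z : x \in V1 -> z \in V2 -> z \in gV G -> gE G z x -> x \in nbhd G V2.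
Proof.
move=> xV1 zV2 zG zx; rewrite inE VG_V12 xV1 /=.
apply/andP; split; last by apply/existsP; exists z; rewrite zV2 zG zx.
by apply/negP => /(V12_disjoint xV1).
Qed.

Lemma lift1_edge x z : x \in gV G -> z \in gV G -> gE G z x ->
  (z \in V1) || (x \in V1) -> gE G1 (lift1 z) (lift1 x).
Proof.
move=> xG zG zx; rewrite G1_edges /lift1.
case: ifP => zV1; case: ifP => xV1 //= _; first by rewrite zV1 xV1 zx.
- have xV2 : x \in V2 by rewrite VG_V12 xV1 in xG.
  by rewrite eqxx (nbhd_V2 zV1 xV2) ?orbT // symG.
- have zV2 : z \in V2 by rewrite VG_V12 zV1 in zG.
  by rewrite eqxx (nbhd_V2 xV1 zV2) ?orbT.
Qed.

Section ActLift.
Variables (i1 : 'I_(size p1)) (v : U).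
Hypothesis vi1 : v \in gV (nth G1 p1 i1).

Lemma act_lift x : x \in act G (emb1 i1) v -> lift1 x \in act G1 i1 v.
Proof.
case/actP => xG xtot [z [zG ztot] zx].
rewrite (tot_lift vi1 xG) in xtot; rewrite (tot_lift vi1 zG) in ztot.
apply/actP; split; rewrite ?lift1_G1 //; exists (lift1 z); first by rewrite lift1_G1.
apply: lift1_edge => //; apply: contraNT ztot; rewrite negb_or => /andP [zV1 xV1].
by rewrite /lift1 (negbTE zV1) (negbTE xV1) in xtot *.
Qed.

Lemma act_notin_V1 x : x \in act G (emb1 i1) v -> x \notin V1 -> x \in nbhd G V1.
Proof.
case/actP => xG xtot [z [zG ztot] zx] xV1.
rewrite (tot_lift vi1 xG) in xtot; rewrite (tot_lift vi1 zG) in ztot.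
have zV1 : z \in V1.
  by apply: contraNT ztot => zV1; rewrite /lift1 (negbTE zV1) (negbTE xV1) in xtot *.
by rewrite inE xG xV1; apply/existsP; exists z; rewrite zV1 zG zx.
Qed.
End ActLift.

Lemma act_complete_step (j : 'I_(size p1)) : act_complete_at G (emb1 j).
Proof.
move=> a b x y; rewrite nth_emb1 => aj bj ab xa yb.
have := complete1 aj bj ab (act_lift aj xa) (act_lift bj yb).
have xG : x \in gV G by case/actP: xa.
have yG : y \in gV G by case/actP: yb.
rewrite G1_edges /lift1; case: ifP => xV1; case: ifP => yV1;
  rewrite ?eqxx ?(negbTE m_notin_V1) ?m_notin_nbhd ?V1_neq_m ?andbF //= ?orbF.
- by case/and3P.
- have yV2 : y \in V2 by rewrite VG_V12 yV1 in yG.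
  have ynb := act_notin_V1 bj yb (negbT yV1).
  by move=> xnb; apply: nbhds_complete.
- have xV2 : x \in V2 by rewrite VG_V12 xV1 in xG.
  have xnb := act_notin_V1 aj xa (negbT xV1).
  by move=> ynb; rewrite symG; apply: nbhds_complete.
Qed.

Lemma sd_invariants_step :
  [/\ parts_cover G p, parts_unique G p, sd_tree_connected G p &
      forall j, act_complete_at G (emb1 j)].
Proof.
split; [exact: parts_cover_step | exact: parts_unique_step | |exact: act_complete_step].
exact: sd_tree_connected_step.
Qed.

End SplitStep.

Section CatOrdinals.
Variables (T : Type) (p1 p2 : seq T).

Lemma ord_catl_proof (j : 'I_(size p1)) : j < size (p1 ++ p2).
Proof. by rewrite size_cat ltn_addr. Qed.

Lemma ord_catr_proof (j : 'I_(size p2)) : size p1 + j < size (p1 ++ p2).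
Proof. by rewrite size_cat ltn_add2l. Qed.

Definition ord_catl (j : 'I_(size p1)) := Ordinal (ord_catl_proof j).
Definition ord_catr (j : 'I_(size p2)) := Ordinal (ord_catr_proof j).

Lemma ord_catl_inj : injective ord_catl.
Proof. by move=> a b /(congr1 val) /= /val_inj. Qed.

Lemma ord_catr_inj : injective ord_catr.
Proof. by move=> a b /(congr1 val) /= /addnI /val_inj. Qed.

Lemma ord_catl_neq_catr j l : ord_catl j != ord_catr l.
Proof. by rewrite -val_eqE /= neq_ltn ltn_addr. Qed.

Lemma ord_cat_cover l : (exists j, l = ord_catl j) \/ (exists j, l = ord_catr j).
Proof.
case: (ltnP l (size p1)) => lp1; first by left; exists (Ordinal lp1); apply: val_inj.
have lp2 : l - size p1 < size p2 by rewrite ltn_subLR // -size_cat.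
by right; exists (Ordinal lp2); apply: val_inj; rewrite /= subnKC.
Qed.

Lemma nth_ord_catl d d' j : nth d (p1 ++ p2) (ord_catl j) = nth d' p1 j.
Proof. by rewrite /= nth_cat ltn_ord; apply: set_nth_default. Qed.

Lemma nth_ord_catr d d' j : nth d (p1 ++ p2) (ord_catr j) = nth d' p2 j.
Proof. by rewrite /= nth_cat ltnNge leq_addr /= addKn; apply: set_nth_default. Qed.
End CatOrdinals.

Section SplitDecomp.
Variable U : finType.
Implicit Types (G : graph U) (p : seq (graph U)).

Lemma split_nbhds_complete G (V1 : {set U}) x y : symmetric (gE G) -> is_split G V1 ->
  x \in V1 -> y \in gV G :\: V1 ->
  x \in nbhd G (gV G :\: V1) -> y \in nbhd G V1 -> gE G x y.
Proof.
move=> symG /and4P [_ _ _ /forallP splitV1] xV1 yV2.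
rewrite !inE => /and3P [_ _ /existsP [z /andP [zV2 /andP [_ zx]]]].
move=> /and3P [_ _ /existsP [w /andP [wV1 /andP [_ wy]]]].
have := splitV1 x; rewrite xV1 /= => /forallP /(_ w); rewrite wV1 /=.
have -> : [exists z0 in gV G :\: V1, gE G x z0].
  by apply/existsP; exists z; rewrite zV2 symG zx.
have -> : [exists z0 in gV G :\: V1, gE G w z0].
  by apply/existsP; exists y; rewrite yV2 wy.
by move=> /eqP /setP /(_ y); rewrite !inE; move: yV2; rewrite inE => ->; rewrite wy.
Qed.

Lemma split_left_sym G (V1 : {set U}) m :
  symmetric (gE G) -> symmetric (gE (split_left G V1 m)).
Proof.
move=> symG x y /=; rewrite [gE G y x]symG [[&& y \in V1, _ & _]]andbCA.
by congr (_ || _); apply: orbC.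
Qed.

Lemma split_right_sym G (V1 : {set U}) m :
  symmetric (gE G) -> symmetric (gE (split_right G V1 m)).
Proof.
move=> symG x y /=; rewrite [gE G y x]symG [[&& y \in _ :\: _, _ & _]]andbCA.
by congr (_ || _); apply: orbC.
Qed.

Lemma sd_invariants_prime G : sd_invariants G [:: G].
Proof.
have ord1 (j : 'I_(size [:: G])) : j = ord0 by apply: val_inj; case: j => [[]].
split=> [x xG | x j l _ _ _ | j l | i a b x y]; rewrite ?(ord1 j) ?(ord1 l) ?(ord1 i) //=.
- by apply/(parts_vertsP G); exists ord0.
move=> aG bG ab /actP [_ + _] /actP [_ + _].
by rewrite /tot aG bG !inE => /eqP -> /eqP ->.
Qed.

Lemma split_decomp_invariants G p :
  split_decomp G p -> symmetric (gE G) -> sd_invariants G p.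
Proof.
elim=> {G p} [G _|G V1 m p1 p2 splitV1 mG _ IH1 _ IH2 meet12] symG.
  exact: sd_invariants_prime.
have [cov1 uniq1 conn1 compl1] := IH1 (split_left_sym V1 m symG).
have [cov2 uniq2 conn2 compl2] := IH2 (split_right_sym V1 m symG).
have V1G : V1 \subset gV G by case/and4P: splitV1.
have VG_V12 x : (x \in gV G) = (x \in V1) || (x \in gV G :\: V1).
  by rewrite inE; case: (boolP (x \in V1)) => //= /(subsetP V1G).
have VG_V21 x : (x \in gV G) = (x \in gV G :\: V1) || (x \in V1).
  by rewrite orbC.
have V12_disj x : x \in V1 -> x \in gV G :\: V1 -> False by rewrite inE => ->.
have marker12 x : x \in parts_verts p1 -> x \in parts_verts p2 -> x = m.
  by move=> x1 x2; apply/set1P; rewrite -meet12 inE x1 x2.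
have cover21 l : (exists j, l = @ord_catr _ p1 p2 j) \/ (exists j, l = @ord_catl _ p1 p2 j).
  by case: (ord_cat_cover l); [right | left].
have disj21 j l : @ord_catr _ p1 p2 j != @ord_catl _ p1 p2 l.
  by rewrite eq_sym ord_catl_neq_catr.
have nbhds21 x y : x \in gV G :\: V1 -> y \in V1 ->
    x \in nbhd G V1 -> y \in nbhd G (gV G :\: V1) -> gE G x y.
  by move=> x2 y1 xnb ynb; rewrite symG; apply: (split_nbhds_complete symG splitV1).
have [cov uniq conn compl_l] := sd_invariants_step
  (G1 := split_left G V1 m) (G2 := split_right G V1 m) VG_V12 V12_disj mG erefl erefl
  marker12 cov1 cov2 uniq1 uniq2 conn1 conn2
  (@nth_ord_catl _ p1 p2 G _) (@nth_ord_catr _ p1 p2 G _)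
  (@ord_catl_inj _ p1 p2) (@ord_catr_inj _ p1 p2) (@ord_cat_cover _ p1 p2)
  (@ord_catl_neq_catr _ p1 p2) symG (fun _ _ => erefl)
  (fun x y => split_nbhds_complete symG splitV1) compl1.
have [_ _ _ compl_r] := sd_invariants_step
  (G1 := split_right G V1 m) (G2 := split_left G V1 m)
  VG_V21 (fun x x2 x1 => V12_disj x x1 x2) mG erefl erefl
  (fun x x2 x1 => marker12 x x1 x2) cov2 cov1 uniq2 uniq1 conn2 conn1
  (@nth_ord_catr _ p1 p2 G _) (@nth_ord_catl _ p1 p2 G _)
  (@ord_catr_inj _ p1 p2) (@ord_catl_inj _ p1 p2) cover21
  disj21 symG (fun _ _ => erefl) nbhds21 compl2.
by split=> // i; case: (ord_cat_cover i) => [[j ->]|[j ->]]; [apply: compl_l | apply: compl_r].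
Qed.
End SplitDecomp.

Lemma complete_bipartite_le_mm (U : finType) (G : graph U) (X A B : {set U}) :
  A \subset X -> B \subset gV G :\: X -> {in A & B, forall x y, gE G x y} ->
  minn #|A| #|B| <= mm G X.
Proof.
move=> AX BX AB.
pose pair_up (n : 'I_(minn #|A| #|B|)) :=
  (enum_val (widen_ord (geq_minl #|A| #|B|) n), enum_val (widen_ord (geq_minr #|A| #|B|) n)).
have pair_up_inj : injective pair_up.
  by move=> n n' [/enum_val_inj /(congr1 val) /= /val_inj].
have matching : is_matching G X (pair_up @: setT).
  apply/andP; split; apply/forallP => q; apply/implyP => /imsetP [n _ ->] /=.
    have [xA yB] := (enum_valP (widen_ord (geq_minl #|A| #|B|) n),
                     enum_valP (widen_ord (geq_minr #|A| #|B|) n)).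
    by rewrite (subsetP AX _ xA) (subsetP BX _ yB) AB.
  apply/forallP => r; apply/implyP => /imsetP [n' _ ->] /=.
  by apply/implyP => /orP [] /eqP /enum_val_inj /(congr1 val) /= /val_inj ->.
have := @leq_bigmax_cond _ (is_matching G X) (fun M => #|M|) _ matching.
by rewrite card_imset // cardsT card_ord.
Qed.

Theorem mainTheorem3 (U : finType) (VG : {set U}) (eG : rel U)
  (Hsym : symmetric eG) (Hirr : irreflexive eG)
  (Hconn : connected_graph (Graph VG eG))
  (parts : seq (graph U)) (Hsd : split_decomp (Graph VG eG) parts)
  (i : 'I_(size parts))
  (Hnt : 3 < #|gV (nth (Graph VG eG) parts i)|)
  (k : nat) (Hk : 0 < k)
  (N : finType) (t : rel N) (delta : N -> U)
  (HT : branch_decomp VG t delta)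
  (Hw : forall u w, t u w -> sm (Graph VG eG) (edge_cut t delta u w) < k)
  (a : U) (Ha : a \in gV (nth (Graph VG eG) parts i))
  (u w : N) (Huw : t u w) :
  k <= #|edge_cut t delta u w :&: act (Graph VG eG) i a| ->
  k <= #|(VG :\: edge_cut t delta u w) :&:
          act_set (Graph VG eG) i (nbrs (nth (Graph VG eG) parts i) a)| ->
  is_split (Graph VG eG) (edge_cut t delta u w).
Proof.
move=> kA kB; have := Hw u w Huw.
set G := Graph VG eG in Hsd kA kB *.
set X := edge_cut t delta u w in kA kB *.
set A := X :&: act G i a in kA.
set B := _ :&: act_set G i _ in kB.
rewrite /sm; case: ifP => // _ mm_lt_k.
suff : k <= mm G X by rewrite leqNgt mm_lt_k.
have [_ _ _ complete] := split_decomp_invariants Hsd Hsym.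
have AB : {in A & B, forall x y, gE G x y}.
  move=> x y /setIP [_ xa] /setIP [_ /bigcupP [b]]; rewrite inE => /and3P [bP _ ab] yb.
  exact: complete i a b x y Ha bP ab xa yb.
apply: leq_trans (complete_bipartite_le_mm (G := G) (subsetIl _ _) (subsetIl _ _) AB).
by rewrite leq_min kA kB.
Qed.
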